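(* Let $f:\mathcal{X}\to\Delta^{k-1}$ be a classifier outputting confidence vectors, and let $x^{(1)},\dots,x^{(n)}\in\mathcal{X}$ be (unlabeled) samples. Let $f_\# P(c)=\frac1n\sum_{i=1}^n\delta_{f(x^{(i)})}$ be the empirical distribution of confidence vectors, and let $P_{\mathrm{pseudo}}(y)=\frac1n\sum_{i=1}^n\delta_{y^{(i)}}$, where $y^{(i)}\in\{0,1\}^k\cap\Delta^{k-1}$ is the one-hot pseudo-label with $y^{(i)}_j=\mathbb{1}[j=\arg\max_{j'} f_{j'}(x^{(i)})]$. Define the average-confidence error estimate $\hat\epsilon_{\mathrm{AC}}=\frac1n\sum_{i=1}^n\bigl(1-\max_j f_j(x^{(i)})\bigr)$. Then $$\hat\epsilon_{\mathrm{AC}}=W_\infty\bigl(f_\# P(c),\,P_{\mathrm{pseudo}}(y)\bigr).$$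
   Context: $\Delta^{k-1}=\{c\in\mathbb{R}^k: c_j\ge 0,\ \sum_j c_j=1\}$ is the probability simplex. For probability distributions $P,Q$ on $\mathbb{R}^k$, $W_\infty(P,Q)=\inf_{\pi\in\Pi(P,Q)}\int\|u-v\|_\infty\,d\pi(u,v)$, where $\Pi(P,Q)$ is the set of couplings of $P$ and $Q$; i.e. $W_\infty$ denotes the Wasserstein (optimal transport) distance with ground cost $c(u,v)=\|u-v\|_\infty$ (not the usual $\infty$-Wasserstein distance). Ties in $\arg\max$ are broken by a fixed rule (e.g. smallest index). *)

From HB Require Import structures.
From mathcomp Require Import all_boot all_order all_algebra.
From mathcomp Require Import boolp classical_sets reals.
Set Implicit Arguments. Unset Strict Implicit. Unset Printing Implicit Defensive.
Import Order.TTheory GRing.Theory Num.Theory.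
Local Open Scope ring_scope.
Local Open Scope classical_set_scope.

Section Defs.
Variables (R : realType) (k : nat).
Local Notation V := 'rV[R]_k.

Definition simplex (c : V) : Prop :=
  (forall j, 0 <= c 0 j) /\ \sum_j c 0 j = 1.

(* max_j c_j (default 0; exact for vectors with nonnegative entries) *)
Definition maxc (c : V) : R := \big[Num.max/0]_(j < k) c 0 j.

Definition linf (u v : V) : R := \big[Num.max/0]_(j < k) `|u 0 j - v 0 j|.

Definition first_argmax (c : V) (j : 'I_k) : bool :=
  [forall i, c 0 i <= c 0 j] && [forall i : 'I_k, (val i < val j)%N ==> (c 0 i < c 0 j)].

Definition onehot (c : V) : V := \row_j (if first_argmax c j then 1 else 0).

(* discrete (finitely supported) distributions on R^k as mass functions *)
Definition empirical (n : nat) (pts : 'I_n -> V) : V -> R :=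
  fun v => (#|[set i | pts i == v]|)%:R / n%:R.

(* pi is a (finitely supported) coupling of p and q, with support listed in S *)
Definition is_coupling (p q : V -> R) (pi : V -> V -> R) (S : seq (V * V)) : Prop :=
  [/\ uniq S,
      (forall u v, pi u v != 0 -> (u, v) \in S),
      (forall u v, 0 <= pi u v),
      (forall u, \sum_(s <- S | s.1 == u) pi s.1 s.2 = p u) &
      (forall v, \sum_(s <- S | s.2 == v) pi s.1 s.2 = q v)].

Definition coupling_cost (pi : V -> V -> R) (S : seq (V * V)) : R :=
  \sum_(s <- S) pi s.1 s.2 * linf s.1 s.2.

(* optimal transport distance with ground cost ||u - v||_infty *)
Definition W_inf (p q : V -> R) : R :=
  inf [set c | exists pi S, is_coupling p q pi S /\ c = coupling_cost pi S].

Definition eps_AC (X : Type) (f : X -> V) (n : nat) (x : 'I_n -> X) : R :=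
  (\sum_(i < n) (1 - maxc (f (x i)))) / n%:R.

End Defs.

From HB Require Import structures.
From mathcomp Require Import all_boot all_order all_algebra.
From mathcomp Require Import boolp classical_sets reals.
From mathcomp Require Import lra.
Set Implicit Arguments. Unset Strict Implicit. Unset Printing Implicit Defensive.
Import Order.TTheory GRing.Theory Num.Theory.
Local Open Scope ring_scope.

(* Every atom of the pseudo-label distribution is a one-hot vector e_j, and
   ||c - e_j||_oo >= 1 - c_j >= 1 - max c; hence every coupling costs at least
   the mean of 1 - max c over the confidence vectors, which is eps_AC.
   Conversely, for c in the simplex the coordinates other than the first
   argmax j sum to 1 - c_j, so ||c - onehot c||_oo = 1 - max c, and the
   deterministic coupling c |-> onehot c attains the bound. *)

Lemma big_fibers (M : nmodType) (I T : eqType) (r : seq I) (U : seq T)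
    (h : I -> T) (G : I -> M) :
  uniq U -> (forall i, i \in r -> h i \in U) ->
  \sum_(u <- U) \sum_(i <- r | h i == u) G i = \sum_(i <- r) G i.
Proof.
move=> uU hU; rewrite (exchange_big_dep xpredT) //= big_seq [RHS]big_seq.
apply: eq_bigr => i ri; under eq_bigl do rewrite eq_sym.
by rewrite -big_filter filter_pred1_uniq ?hU // big_seq1.
Qed.

Lemma inf_eq_lbound_mem (R : realType) (E : set R) (x : R) :
  E x -> lbound E x -> inf E = x.
Proof.
move=> Ex lbx; apply/le_anti; rewrite lb_le_inf //; last by exists x.
by rewrite andbT ge_inf //; exists x.
Qed.

Section Transport.
Variables (R : realType) (k : nat).
Local Notation V := 'rV[R]_k.

Lemma first_argmax_exists (c : V) : (0 < k)%N -> exists j, first_argmax c j.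
Proof.
move=> k_gt0; pose i0 : 'I_k := Ordinal k_gt0.
pose is_max i := [forall t, c 0 t <= c 0 i].
have [m _ m_max] := @arg_maxP _ R _ i0 xpredT (fun i => c 0 i) isT.
have m_is_max : is_max m by apply/forallP => t; exact: m_max.
have [j j_max j_first] := arg_minnP (@nat_of_ord k) m_is_max.
exists j; apply/andP; split=> //.
apply/forallP => i; apply/implyP => lt_ij; rewrite ltNge; apply/negP => le_ji.
have i_max : is_max i.
  by apply/forallP => t; apply: le_trans le_ji; exact: (forallP j_max).
by move: (j_first i i_max); rewrite leqNgt lt_ij.
Qed.

Lemma first_argmax_uniq (c : V) j j' :
  first_argmax c j -> first_argmax c j' -> j = j'.
Proof.
move=> /andP[/forallP j_max /forallP j_first] /andP[/forallP j'_max /forallP j'_first].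
case: (ltngtP (val j) (val j')) => [lt_jj'|lt_j'j|/val_inj //].
  by move: (implyP (j'_first j) lt_jj'); rewrite ltNge j_max.
by move: (implyP (j_first j') lt_j'j); rewrite ltNge j'_max.
Qed.

Lemma onehotE (c : V) j i :
  first_argmax c j -> onehot c 0 i = if i == j then 1 else 0.
Proof.
move=> j_arg; rewrite mxE; case: eqVneq => [-> | ne_ij]; first by rewrite j_arg.
by case: ifP => // i_arg; rewrite (first_argmax_uniq i_arg j_arg) eqxx in ne_ij.
Qed.

Lemma maxc_first_argmax (c : V) j :
  0 <= c 0 j -> first_argmax c j -> maxc c = c 0 j.
Proof.
move=> cj_ge0 /andP[/forallP j_max _]; apply/le_anti.
by rewrite bigmax_le //= (le_bigmax _ (fun i => c 0 i)).
Qed.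

Lemma one_sub_maxc_le_linf (u v : V) j : v 0 j = 1 -> 1 - maxc u <= linf u v.
Proof.
move=> vj1; apply: le_trans (le_bigmax _ (fun i => `|u 0 i - v 0 i|) j).
rewrite vj1 distrC; apply: le_trans (ler_norm _).
by rewrite lerB // (le_bigmax _ (fun i => u 0 i)).
Qed.

Lemma simplex_dim_gt0 (c : V) : simplex c -> (0 < k)%N.
Proof.
by case: k c => [|//] c [_]; rewrite big_ord0 => /eqP; rewrite eq_sym oner_eq0.
Qed.

Lemma onehot_first_argmax (c : V) :
  simplex c -> exists2 j, first_argmax c j & onehot c 0 j = 1.
Proof.
move=> /simplex_dim_gt0 /(first_argmax_exists c) [j j_arg].
by exists j; rewrite // (onehotE j j_arg) eqxx.
Qed.

Lemma linf_onehot (c : V) : simplex c -> linf c (onehot c) = 1 - maxc c.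
Proof.
move=> c_simplex; have [j j_arg onehot_j] := onehot_first_argmax c_simplex.
case: c_simplex => c_ge0 c_sum1.
have c_sumD1 : c 0 j + \sum_(i | i != j) c 0 i = 1 by rewrite -c_sum1 [RHS](bigD1 j).
have rest_ge0 : 0 <= \sum_(i | i != j) c 0 i by rewrite sumr_ge0.
apply/le_anti; rewrite (one_sub_maxc_le_linf _ onehot_j) andbT.
rewrite (maxc_first_argmax (c_ge0 j) j_arg) bigmax_le ?subr_ge0 //; first lra.
move=> i _; rewrite (onehotE i j_arg); have [-> | ne_ij] := eqVneq i j.
  by rewrite distrC ger0_norm //; lra.
rewrite subr0 ger0_norm //.
have : c 0 i <= \sum_(l | l != j) c 0 l by rewrite (bigD1 i) //= lerDl sumr_ge0.
lra.
Qed.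

Section Empirical.
Variables (n : nat) (pts : 'I_n -> V).

Lemma empiricalE u : empirical pts u = (\sum_i (pts i == u)%:R) / n%:R.
Proof.
rewrite /empirical -sum1_card natr_sum big_mkcond /=.
congr (_ / _); apply: eq_bigr => i _.
by rewrite [i \in _]asboolb; case: (pts i == u).
Qed.

Lemma empirical_ge0 u : 0 <= empirical pts u.
Proof. by rewrite divr_ge0. Qed.

Lemma empirical_neq0 u : empirical pts u != 0 -> exists i, pts i = u.
Proof.
rewrite empiricalE; case: (pickP (fun i => pts i == u)) => [i /eqP <-|none].
  by exists i.
by rewrite big1 ?mul0r ?eqxx // => i _; rewrite none.
Qed.

Lemma sum_empirical (U : seq V) (g : V -> R) :
  uniq U -> (forall i, pts i \in U) ->
  \sum_(u <- U) empirical pts u * g u = (\sum_i g (pts i)) / n%:R.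
Proof.
move=> uU ptsU.
transitivity (\sum_(u <- U) (\sum_(i | pts i == u) g (pts i)) / n%:R).
  apply: eq_bigr => u _; rewrite empiricalE mulrAC mulr_suml; congr (_ / _).
  rewrite [RHS]big_mkcond /=; apply: eq_bigr => i _.
  by case: eqP => [->|_]; rewrite ?mul1r ?mul0r.
by rewrite -mulr_suml big_fibers.
Qed.

End Empirical.

Section Coupling.
Variables (p q : V -> R) (pi : V -> V -> R) (S : seq (V * V)).
Hypothesis pi_coupling : is_coupling p q pi S.

Lemma coupling_le_snd u v : pi u v <= q v.
Proof.
case: pi_coupling => uS S_supp pi_ge0 _ <-.
have [-> | /S_supp uvS] := eqVneq (pi u v) 0; first by rewrite sumr_ge0.
rewrite big_mkcond (bigD1_seq (u, v)) //= eqxx lerDl sumr_ge0 // => s _.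
by case: ifP.
Qed.

Lemma sum_coupling_fst (U : seq V) (g : V -> R) :
  uniq U -> (forall s, s \in S -> s.1 \in U) ->
  \sum_(s <- S) pi s.1 s.2 * g s.1 = \sum_(u <- U) p u * g u.
Proof.
case: pi_coupling => _ _ _ p_marg _ uU SU.
rewrite -(big_fibers (fun s => pi s.1 s.2 * g s.1) uU SU).
apply: eq_bigr => u _; rewrite -p_marg mulr_suml.
by apply: eq_bigr => s /eqP ->.
Qed.

Lemma coupling_cost_ge (g : V -> R) :
  (forall u v, 0 < q v -> g u <= linf u v) ->
  \sum_(s <- S) pi s.1 s.2 * g s.1 <= coupling_cost pi S.
Proof.
case: pi_coupling => _ _ pi_ge0 _ _ g_le; apply: ler_sum => s _.
have [-> | pi_neq0] := eqVneq (pi s.1 s.2) 0; first by rewrite !mul0r.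
rewrite ler_wpM2l // g_le // (lt_le_trans _ (coupling_le_snd s.1 s.2)) //.
by rewrite lt0r pi_neq0 pi_ge0.
Qed.

End Coupling.

Lemma sum_coupling_empirical n (pts : 'I_n -> V) q pi S (g : V -> R) :
  is_coupling (empirical pts) q pi S ->
  \sum_(s <- S) pi s.1 s.2 * g s.1 = (\sum_i g (pts i)) / n%:R.
Proof.
move=> pi_coupling.
have uU := undup_uniq ([seq s.1 | s <- S] ++ codom pts).
rewrite (sum_coupling_fst pi_coupling _ uU) => [|s sS].
  by rewrite sum_empirical // => i; rewrite mem_undup mem_cat codom_f orbT.
by rewrite mem_undup mem_cat map_f.
Qed.

Section GraphCoupling.
Variables (n : nat) (pts : 'I_n -> V) (T : V -> V).

Definition graph_plan (u v : V) : R := (v == T u)%:R * empirical pts u.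

Definition graph_support : seq (V * V) := [seq (u, T u) | u <- undup (codom pts)].

Lemma sum_graph_plan (G : V * V -> R) :
  \sum_(s <- graph_support) G s * graph_plan s.1 s.2
  = (\sum_i G (pts i, T (pts i))) / n%:R.
Proof.
rewrite big_map -(sum_empirical (fun u => G (u, T u)) (undup_uniq (codom pts))).
  by apply: eq_bigr => u _; rewrite /graph_plan eqxx mul1r mulrC.
by move=> i; rewrite mem_undup codom_f.
Qed.

Lemma graph_coupling :
  is_coupling (empirical pts) (empirical (fun i => T (pts i))) graph_plan graph_support.
Proof.
have marginal (P : pred (V * V)) :
    \sum_(s <- graph_support | P s) graph_plan s.1 s.2
    = (\sum_i (P (pts i, T (pts i)))%:R) / n%:R.
  rewrite -(sum_graph_plan (fun s => (P s)%:R)) big_mkcond; apply: eq_bigr => s _.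
  by case: (P s); rewrite ?mul1r ?mul0r.
split.
- by rewrite map_inj_uniq ?undup_uniq // => u u' [].
- move=> u v; rewrite /graph_plan; have [-> | ] := eqVneq v (T u); last first.
    by rewrite mul0r eqxx.
  rewrite mul1r => /empirical_neq0 [i <-].
  by rewrite map_f // mem_undup codom_f.
- by move=> u v; rewrite mulr_ge0 ?empirical_ge0.
- by move=> u; rewrite marginal empiricalE.
- by move=> v; rewrite marginal empiricalE.
Qed.

Lemma graph_cost :
  coupling_cost graph_plan graph_support
  = (\sum_i linf (pts i) (T (pts i))) / n%:R.
Proof.
rewrite /coupling_cost -(sum_graph_plan (fun s => linf s.1 s.2)).
by apply: eq_bigr => s _; rewrite mulrC.
Qed.

End GraphCoupling.

End Transport.

Theorem mainTheorem1 (R : realType) (k n : nat) (X : Type)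
  (f : X -> 'rV[R]_k) (x : 'I_n -> X)
  (hf : forall z, simplex (f z)) (hn : (0 < n)%N) :
  eps_AC f x =
  W_inf (empirical (fun i => f (x i))) (empirical (fun i => onehot (f (x i)))).
Proof.
set pts := fun i => f (x i).
have pts_simplex i : simplex (pts i) := hf (x i).
rewrite /W_inf; symmetry; apply: inf_eq_lbound_mem.
  exists (graph_plan pts (@onehot R k)), (graph_support pts (@onehot R k)).
  split; first exact: graph_coupling.
  rewrite graph_cost /eps_AC; congr (_ / _); apply: eq_bigr => i _.
  by rewrite (linf_onehot (pts_simplex i)).
move=> _ [pi [S [pi_coupling ->]]].
rewrite /eps_AC -(sum_coupling_empirical (fun u => 1 - maxc u) pi_coupling).
apply: (coupling_cost_ge (g := fun u => 1 - maxc u) pi_coupling) => u v /lt0r_neq0 q_neq0.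
have [i <-] := empirical_neq0 q_neq0.
have [j _ onehot_j] := onehot_first_argmax (pts_simplex i).
exact: one_sub_maxc_le_linf onehot_j.
Qed.
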